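(* Let $k\ge0$, let $s$ be the singular factor of length $q_k$ of slope $\alpha$, let $w\in\mathcal{L}_\alpha$ be a complete first return to $s$ in the same phase, and write $s^{-1}ws^{-1}=u_0u_1\cdots u_{n-1}$ with $|u_0|=\cdots=|u_{n-1}|=q_k$. Put $\lambda=q_{k+1}-p_{k+1}-1$ if $k$ is odd and $\lambda=p_{k+1}-1$ if $k$ is even. Then the words $u_0,u_1,\ldots,u_{\lambda-1}$ end with the same letter as $s$, and the words $u_{n-\lambda},u_{n-\lambda+1},\ldots,u_{n-1}$ begin with the same letter as $s$. Moreover, $s$ begins and ends with the same letter.
   Context: $\alpha\in(0,1)$ irrational, $\alpha=[0;a_1,a_2,\ldots]$ with positive integers $a_i$, $a_1\ge2$; $p_{-1}=1,q_{-1}=0,p_0=0,q_0=1,p_1=1,q_1=a_1$, $p_k=a_kp_{k-1}+p_{k-2}$, $q_k=a_kq_{k-1}+q_{k-2}$ ($k\ge2$). Identify the circle $\mathbb{T}$ with $[0,1)$, $R(\rho)=\{\rho+\alpha\}$; fix one convention, $I_0=[0,1-\alpha)$, $I_1=[1-\alpha,1)$ or $I_0=(0,1-\alpha]$, $I_1=(1-\alpha,1]$. $\mathbf{s}_{\rho,\alpha}$ has $n$-th letter $0$ if $R^n(\rho)\in I_0$ and $1$ otherwise; all such words share the set $\mathcal{L}_\alpha$ of finite factors. For $v=b_0\cdots b_{n-1}\in\mathcal{L}_\alpha$, $[v]=\bigcap_{i}R^{-i}(I_{b_i})$ ($\mathbf{s}_{\rho,\alpha}$ begins with $v$ iff $\rho\in[v]$).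 The singular factor of length $q_k$ is the unique $s\in\mathcal{L}_\alpha$ of length $q_k$ with $[s]$ having endpoints $0$ and $\{-q_k\alpha\}$. A word $u$ is a complete first return to $v$ in the same phase if $u$ has $v$ as a prefix and a suffix, $|u|\equiv0\pmod{|v|}$, $u$ contains at least two occurrences of $v$, and every occurrence of $v$ in $u$ at a position $i\equiv0\pmod{|v|}$ (positions from $0$) has $i=0$ or $i=|u|-|v|$. $s^{-1}ws^{-1}$ denotes $w$ with its prefix $s$ and suffix $s$ removed. *)

From Stdlib Require Import Reals Lra Lia Arith List.
Import ListNotations.
Open Scope R_scope.

(* pq a k = ((p_k, q_k), (p_{k+1}, q_{k+1})) with p_0 = 0, q_0 = 1,
   p_1 = 1, q_1 = a 1, p_k = a_k p_{k-1} + p_{k-2}, q_k = a_k q_{k-1} + q_{k-2}. *)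
Fixpoint pq (a : nat -> nat) (k : nat) : (nat * nat) * (nat * nat) :=
  match k with
  | O => ((0%nat, 1%nat), (1%nat, a 1%nat))
  | S k' =>
      let '((p0, q0), (p1, q1)) := pq a k' in
      ((p1, q1), (a (k' + 2)%nat * p1 + p0, a (k' + 2)%nat * q1 + q0)%nat)
  end.

Definition cf_p (a : nat -> nat) (k : nat) : nat := fst (fst (pq a k)).
Definition cf_q (a : nat -> nat) (k : nat) : nat := snd (fst (pq a k)).

(* alpha = [0; a_1, a_2, ...] : the convergents p_k/q_k tend to alpha *)
Definition is_cf_expansion (alpha : R) (a : nat -> nat) : Prop :=
  (forall i, (1 <= i)%nat -> (0 < a i)%nat) /\
  Un_cv (fun k => INR (cf_p a k) / INR (cf_q a k)) alpha.

Definition irrational (x : R) : Prop :=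
  ~ exists (p : Z) (q : nat), (0 < q)%nat /\ x = IZR p / INR q.

(* circle T identified with [0,1); R(rho) = {rho + alpha} *)
Definition rot (alpha rho : R) : R := frac_part (rho + alpha).

(* convention I_0 = [0, 1 - alpha), I_1 = [1 - alpha, 1) *)
Definition in_I0 (alpha x : R) : Prop := 0 <= x < 1 - alpha.

Definition sturm (alpha rho : R) (n : nat) : nat :=
  let x := Nat.iter n (rot alpha) rho in
  if Rle_dec 0 x then (if Rlt_dec x (1 - alpha) then 0%nat else 1%nat) else 1%nat.

Definition in_circle (rho : R) : Prop := 0 <= rho < 1.

Definition in_lang (alpha : R) (v : list nat) : Prop :=
  exists rho, in_circle rho /\ exists i : nat,
    forall j, (j < length v)%nat -> sturm alpha rho (i + j) = nth j v 0%nat.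

Definition cylinder (alpha : R) (v : list nat) (rho : R) : Prop :=
  in_circle rho /\
  forall j, (j < length v)%nat -> sturm alpha rho j = nth j v 0%nat.

(* s is a singular factor of length q_k: [s] has endpoints 0 and {-q_k alpha};
   with the convention above cylinders are left-closed right-open arcs, so
   [s] = [0, {-q_k alpha}) or [s] = [{-q_k alpha}, 1). *)
Definition singular_factor (alpha : R) (a : nat -> nat) (k : nat) (s : list nat) : Prop :=
  in_lang alpha s /\ length s = cf_q a k /\
  let x := frac_part (- (INR (cf_q a k) * alpha)) in
  ((forall rho, cylinder alpha s rho <-> 0 <= rho < x) \/
   (forall rho, cylinder alpha s rho <-> x <= rho < 1)).

Definition occurs_at (v w : list nat) (i : nat) : Prop :=
  (i + length v <= length w)%nat /\ firstn (length v) (skipn i w) = v.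

Definition complete_first_return (v u : list nat) : Prop :=
  occurs_at v u 0 /\
  occurs_at v u (length u - length v) /\
  Nat.modulo (length u) (length v) = 0%nat /\
  (exists i j, i <> j /\ occurs_at v u i /\ occurs_at v u j) /\
  (forall i, occurs_at v u i -> Nat.modulo i (length v) = 0%nat ->
             i = 0%nat \/ i = (length u - length v)%nat).

(* s^{-1} w s^{-1} *)
Definition strip (s w : list nat) : list nat :=
  skipn (length s) (firstn (length w - length s) w).

Definition block (L : nat) (m : list nat) (i : nat) : list nat :=
  firstn L (skipn (i * L) m).

Definition first_letter (u : list nat) : nat := nth 0 u 0%nat.
Definition last_letter (u : list nat) : nat := nth (length u - 1) u 0%nat.

(* Let rho be a point whose orbit under R reads w, and X_j = R^(j q_k)(rho) the
   point where the j-th block of length q_k of w begins: the first letter of that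
   block is read off X_j, its last letter off X_(j+1).  As q_k alpha = p_k + (-1)^k d_k
   with d_k = |q_k alpha - p_k|, the X_j advance by (-1)^k d_k, and [s] is the arc of
   length d_k ending at 1 (k even) or starting at 0 (k odd).  A complete first return
   means that X_0 and X_(N-1) lie in [s] and no X_j in between does, so the X_j sweep
   the circle once without wrapping.  For k even, p_(k+1) d_k + p_k d_(k+1) = alpha
   keeps X_1, ..., X_(lam+1) inside [0, alpha) = R(I_1) and X_(N-1-lam), ..., X_(N-1)
   inside I_1, so every letter concerned is 1; for k odd the identity
   (q_(k+1) - p_(k+1)) d_k + (q_k - p_k) d_(k+1) = 1 - alpha gives the mirror image,
   with letter 0. *)

From Stdlib Require Import Reals Lra Lia Arith List.
Open Scope R_scope.

Lemma cf_p_SS a k : cf_p a (S (S k)) = (a (k + 2) * cf_p a (S k) + cf_p a k)%nat.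
Proof. unfold cf_p; simpl; destruct (pq a k) as [[p0 q0] [p1 q1]]; reflexivity. Qed.

Lemma cf_q_SS a k : cf_q a (S (S k)) = (a (k + 2) * cf_q a (S k) + cf_q a k)%nat.
Proof. unfold cf_q; simpl; destruct (pq a k) as [[p0 q0] [p1 q1]]; reflexivity. Qed.

Lemma pow_m1_sq k : (-1) ^ k * (-1) ^ k = 1.
Proof. rewrite <- pow_add, <- (Nat.mul_1_l k), <- Nat.mul_add_distr_r. apply pow_1_even. Qed.

Lemma pow_m1_odd k : (-1) ^ k = if Nat.odd k then -1 else 1.
Proof.
  induction k as [|k IH]; [reflexivity|].
  rewrite Nat.odd_succ, <- Nat.negb_odd; simpl pow; rewrite IH.
  destruct (Nat.odd k); simpl; ring.
Qed.

Section Convergents.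

Variable a : nat -> nat.

Local Notation p k := (INR (cf_p a k)).
Local Notation q k := (INR (cf_q a k)).

Lemma cf_det k : p (S k) * q k - p k * q (S k) = (-1) ^ k.
Proof.
  induction k as [|k IH]; [simpl; ring|].
  rewrite cf_p_SS, cf_q_SS, !plus_INR, !mult_INR; simpl pow; rewrite <- IH; ring.
Qed.

(* d_k = |q_k alpha - p_k|: by [cf_dist_pos] the sign of q_k alpha - p_k is (-1)^k. *)
Definition cf_dist (alpha : R) (k : nat) : R := (-1) ^ k * (q k * alpha - p k).

Lemma cf_q_mul_alpha alpha k : q k * alpha = p k + (-1) ^ k * cf_dist alpha k.
Proof. unfold cf_dist; rewrite <- Rmult_assoc, pow_m1_sq; ring. Qed.

Lemma cf_dist_q alpha k : q (S k) * cf_dist alpha k + q k * cf_dist alpha (S k) = 1.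
Proof.
  unfold cf_dist; simpl pow; rewrite <- (pow_m1_sq k), <- cf_det; ring.
Qed.

Lemma cf_dist_p alpha k : p (S k) * cf_dist alpha k + p k * cf_dist alpha (S k) = alpha.
Proof.
  unfold cf_dist; simpl pow.
  rewrite <- (Rmult_1_r alpha) at 3; rewrite <- (pow_m1_sq k), <- cf_det; ring.
Qed.

Hypothesis a_pos : forall i, (1 <= i)%nat -> (0 < a i)%nat.
Hypothesis a1_ge2 : (2 <= a 1)%nat.

Lemma cf_bounds k :
  (1 <= cf_q a k)%nat /\ (cf_p a k < cf_q a k)%nat /\ (1 <= cf_p a (S k))%nat.
Proof.
  enough (H : forall k, ((1 <= cf_q a k) /\ (cf_p a k < cf_q a k) /\ (1 <= cf_p a (S k)))%nat /\
                    ((1 <= cf_q a (S k)) /\ (cf_p a (S k) < cf_q a (S k)))%nat) by apply H.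
  clear k; induction k as [|k IH].
  - change (cf_q a 0) with 1%nat; change (cf_p a 0) with 0%nat;
    change (cf_q a 1) with (a 1%nat); change (cf_p a 1) with 1%nat. lia.
  - rewrite cf_q_SS, cf_p_SS.
    pose proof (a_pos (k + 2) ltac:(lia)); nia.
Qed.

Lemma cf_q_pos k : 0 < q k.
Proof. apply lt_0_INR; destruct (cf_bounds k); lia. Qed.

Lemma convergent_step k : 0 <= (-1) ^ k * (p (S (S k)) / q (S (S k)) - p k / q k).
Proof.
  pose proof (cf_q_pos k); pose proof (cf_q_pos (S (S k))).
  assert (Hcross : p (S (S k)) * q k - p k * q (S (S k)) = INR (a (k + 2)) * (-1) ^ k).
  { rewrite cf_p_SS, cf_q_SS, !plus_INR, !mult_INR, <- cf_det; ring. }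
  replace ((-1) ^ k * (p (S (S k)) / q (S (S k)) - p k / q k))
    with (INR (a (k + 2)) * ((-1) ^ k * (-1) ^ k) / (q k * q (S (S k)))).
  - rewrite pow_m1_sq, Rmult_1_r; apply Rle_mult_inv_pos; [apply pos_INR | nra].
  - rewrite <- Rmult_assoc, <- Hcross; field; lra.
Qed.

Lemma convergent_even_shift k m : 0 <= (-1) ^ k * (p (k + 2 * m) / q (k + 2 * m) - p k / q k).
Proof.
  induction m as [|m IH].
  - rewrite Nat.add_0_r; lra.
  - replace (k + 2 * S m)%nat with (S (S (k + 2 * m))) by lia.
    pose proof (convergent_step (k + 2 * m)) as Hstep.
    rewrite pow_add, pow_1_even, Rmult_1_r in Hstep. nra.
Qed.

Lemma convergent_side alpha :
  Un_cv (fun k => p k / q k) alpha -> forall k, 0 <= (-1) ^ k * (alpha - p k / q k).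
Proof.
  intros Hcv k. apply Rnot_lt_le; intros Hneg.
  destruct (Hcv _ (Ropp_0_gt_lt_contravar _ Hneg)) as [N HN].
  specialize (HN (k + 2 * N)%nat ltac:(lia)); unfold Rdist in HN.
  pose proof (convergent_even_shift k N).
  assert (Hsgn : (-1) ^ k * (p (k + 2 * N) / q (k + 2 * N) - alpha)
                 <= Rabs (p (k + 2 * N) / q (k + 2 * N) - alpha)).
  { rewrite pow_m1_odd; destruct (Nat.odd k);
      [rewrite <- Rabs_Ropp | ]; apply Rle_trans with (2 := RRle_abs _); lra. }
  nra.
Qed.

Lemma cf_dist_pos alpha :
  is_cf_expansion alpha a -> irrational alpha -> forall k, 0 < cf_dist alpha k.
Proof.
  intros [_ Hcv] Hirr k. pose proof (cf_q_pos k) as Hq.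
  assert (Hd : cf_dist alpha k = q k * ((-1) ^ k * (alpha - p k / q k))).
  { unfold cf_dist; field; lra. }
  destruct (Rle_lt_or_eq_dec 0 (cf_dist alpha k)) as [Hlt | Heq]; auto.
  { rewrite Hd; apply Rmult_le_pos; [lra | apply convergent_side, Hcv]. }
  exfalso; apply Hirr; exists (Z.of_nat (cf_p a k)), (cf_q a k).
  split; [destruct (cf_bounds k); lia|].
  rewrite <- INR_IZR_INZ; apply (Rmult_eq_reg_l (q k)); [|lra].
  unfold cf_dist in Heq; field_simplify; [|lra].
  rewrite pow_m1_odd in Heq; destruct (Nat.odd k); lra.
Qed.

End Convergents.

Lemma frac_part_eq t (c : Z) : IZR c <= t < IZR c + 1 -> frac_part t = t - IZR c.
Proof.
  intros Ht; symmetry.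
  apply (proj2 (Int_part_frac_part_spec t c (t - IZR c) ltac:(lra) ltac:(ring))).
Qed.

Lemma circle_shift_eq y t (z c : Z) :
  0 <= y < 1 -> y = t - IZR z -> IZR c <= t < IZR c + 1 -> y = t - IZR c.
Proof.
  intros Hy -> Ht.
  assert (Hzc : IZR (z - c) < 1 /\ -1 < IZR (z - c)) by (rewrite minus_IZR; lra).
  destruct Hzc as [Hlt Hgt]; apply lt_IZR in Hlt; apply lt_IZR in Hgt.
  replace z with c by lia; reflexivity.
Qed.

(* Only the first step wraps around the circle (by c); after it the orbit is an
   arithmetic progression. *)
Lemma unwrap_orbit (X : nat -> R) (e : R) (c : Z) (M : nat) :
  (forall j, 0 <= X j < 1) ->
  (forall j, exists z, X (S j) = X j + e - IZR z) ->
  IZR c <= X 0%nat + e < IZR c + 1 ->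
  (forall j, (1 <= j < M)%nat -> 0 <= X j + e < 1) ->
  forall j, (1 <= j <= M)%nat -> X j = X 0%nat + INR j * e - IZR c.
Proof.
  intros HX Hstep Hfirst Hmid j Hj.
  induction j as [|j IH]; [lia|].
  destruct (Hstep j) as [z Hz].
  destruct (Nat.eq_dec j 0) as [->|Hj0].
  - rewrite (circle_shift_eq _ _ _ c (HX 1%nat) Hz Hfirst); simpl; ring.
  - rewrite (circle_shift_eq _ _ _ 0 (HX (S j)) Hz) by (rewrite Rplus_0_l; apply Hmid; lia).
    rewrite IH, S_INR by lia; simpl; ring.
Qed.

Lemma rot_circle alpha x : in_circle (rot alpha x).
Proof. unfold in_circle, rot; destruct (base_fp (x + alpha)); lra. Qed.

Lemma iter_rot_circle alpha n x : in_circle x -> in_circle (Nat.iter n (rot alpha) x).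
Proof. intros Hx; destruct n; [exact Hx | rewrite Nat.iter_succ; apply rot_circle]. Qed.

Lemma iter_rot_shift alpha n x : exists z, Nat.iter n (rot alpha) x = x + INR n * alpha - IZR z.
Proof.
  induction n as [|n [z Hz]]; [exists 0%Z; simpl; ring|].
  exists (z + Int_part (Nat.iter n (rot alpha) x + alpha))%Z.
  rewrite Nat.iter_succ; unfold rot at 1, frac_part; rewrite Hz, plus_IZR, S_INR; ring.
Qed.

Lemma sturm_shift alpha rho i j :
  sturm alpha rho (i + j) = sturm alpha (Nat.iter i (rot alpha) rho) j.
Proof. unfold sturm; rewrite Nat.add_comm, Nat.iter_add; reflexivity. Qed.

Lemma sturm_0 alpha x n : 0 <= Nat.iter n (rot alpha) x < 1 - alpha -> sturm alpha x n = 0%nat.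
Proof. intros H; unfold sturm; destruct Rle_dec; [destruct Rlt_dec|]; lra || auto. Qed.

Lemma sturm_1 alpha x n : 1 - alpha <= Nat.iter n (rot alpha) x -> sturm alpha x n = 1%nat.
Proof. intros H; unfold sturm; destruct Rle_dec; [destruct Rlt_dec|]; lra || auto. Qed.

Section Letters.

Variable alpha : R.
Hypothesis alpha_01 : 0 < alpha < 1.

(* R maps I_1 onto [0, alpha) and I_0 onto [alpha, 1), so a letter is
   also read off the next point of the orbit. *)
Lemma rot_lt_alpha_iff y : in_circle y -> rot alpha y < alpha <-> 1 - alpha <= y.
Proof.
  intros Hy; unfold in_circle, rot in *.
  destruct (Rlt_le_dec (y + alpha) 1).
  - rewrite (frac_part_eq _ 0) by (simpl; lra); simpl; lra.
  - rewrite (frac_part_eq _ 1) by (simpl; lra); simpl; lra.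
Qed.

Lemma sturm_1_before x n :
  in_circle x -> Nat.iter (S n) (rot alpha) x < alpha -> sturm alpha x n = 1%nat.
Proof.
  intros Hx H; apply sturm_1, rot_lt_alpha_iff; [apply iter_rot_circle, Hx | exact H].
Qed.

Lemma sturm_0_before x n :
  in_circle x -> alpha <= Nat.iter (S n) (rot alpha) x -> sturm alpha x n = 0%nat.
Proof.
  intros Hx H; pose proof (iter_rot_circle alpha n x Hx) as Hy.
  apply sturm_0; split; [apply Hy|].
  apply Rnot_le_lt; intros Hle; apply (rot_lt_alpha_iff _ Hy) in Hle.
  rewrite Nat.iter_succ in H; lra.
Qed.

End Letters.

Definition block_point (alpha : R) (L : nat) (rho : R) (j : nat) : R :=
  Nat.iter (j * L) (rot alpha) rho.

Definition first_return_orbit (alpha : R) (s : list nat) (L : nat) (rho : R) (N : nat) : Prop :=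
  cylinder alpha s (block_point alpha L rho 0) /\
  cylinder alpha s (block_point alpha L rho (N - 1)) /\
  forall j, (1 <= j <= N - 2)%nat -> ~ cylinder alpha s (block_point alpha L rho j).

(* Positions (i + 2) L - 1 and (i + 1) L of w carry the last and the first letter of
   the i-th block u_i of s^-1 w s^-1; positions 0 and L - 1 those of s. *)
Definition block_letters (alpha rho : R) (L N lam c : nat) : Prop :=
  sturm alpha rho 0 = c /\ sturm alpha rho (L - 1) = c /\
  (forall i, (i < lam)%nat -> (i < N - 2)%nat /\ sturm alpha rho ((i + 2) * L - 1) = c) /\
  (forall i, (N - 2 - lam <= i < N - 2)%nat -> sturm alpha rho (S i * L) = c).

Section BlockLetters.

Variables (alpha rho d : R) (s : list nat) (L N lam : nat).
Hypothesis alpha_01 : 0 < alpha < 1.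
Hypothesis rho_circle : in_circle rho.
Hypothesis L_pos : (0 < L)%nat.
Hypothesis N_ge2 : (2 <= N)%nat.
Hypothesis d_pos : 0 < d.

Local Notation X := (block_point alpha L rho).

Lemma block_point_circle j : 0 <= X j < 1.
Proof. apply iter_rot_circle, rho_circle. Qed.

Lemma block_point_step e :
  (forall x, exists z, Nat.iter L (rot alpha) x = x + e - IZR z) ->
  forall j, exists z, X (S j) = X j + e - IZR z.
Proof.
  intros Hstep j; unfold block_point.
  rewrite Nat.mul_succ_l, Nat.add_comm, Nat.iter_add; apply Hstep.
Qed.

Lemma block_letters_even :
  (forall x, exists z, Nat.iter L (rot alpha) x = x + d - IZR z) ->
  (INR lam + 1) * d <= alpha ->
  (forall r, cylinder alpha s r <-> 1 - d <= r < 1) ->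
  first_return_orbit alpha s L rho N ->
  block_letters alpha rho L N lam 1.
Proof.
  intros Hstep Hlam Hs (H0 & HN & Hmid).
  rewrite Hs in H0, HN.
  pose proof (pos_INR lam); assert (d <= alpha) by nra.
  assert (Hu : forall j, (1 <= j <= N - 1)%nat -> X j = X 0%nat + INR j * d - 1).
  { apply (unwrap_orbit X d 1); [apply block_point_circle | apply block_point_step, Hstep | lra |].
    intros j Hj; pose proof (block_point_circle j).
    assert (X j < 1 - d) by (apply Rnot_le_lt; intros Hin; apply (Hmid j ltac:(lia)), Hs; lra).
    lra. }
  assert (HNd : 1 < INR N * d).
  { rewrite Hu, minus_INR in HN by lia; simpl INR in HN; pose proof (block_point_circle 0); nra. }
  split; [|split; [|split]].
  - apply sturm_1; change (1 - alpha <= X 0%nat); nra.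
  - apply sturm_1_before; [exact alpha_01 | exact rho_circle |].
    replace (S (L - 1)) with (1 * L)%nat by lia; change (X 1%nat < alpha).
    rewrite Hu by lia; simpl INR; nra.
  - intros i Hi.
    assert (HiN : (i < N - 2)%nat).
    { apply Nat.nle_gt; intros Hle.
      assert (INR N <= INR lam + 1) by (rewrite <- S_INR; apply le_INR; lia). nra. }
    split; [exact HiN|].
    apply sturm_1_before; [exact alpha_01 | exact rho_circle |].
    replace (S ((i + 2) * L - 1)) with ((i + 2) * L)%nat by nia; change (X (i + 2)%nat < alpha).
    assert (INR (i + 2) <= INR lam + 1) by (rewrite <- S_INR; apply le_INR; lia).
    rewrite Hu by lia; pose proof (block_point_circle 0); nra.
  - intros i Hi.
    apply sturm_1; change (1 - alpha <= X (S i)).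
    assert (INR (N - 1) <= INR (S i) + INR lam) by (rewrite <- plus_INR; apply le_INR; lia).
    rewrite Hu in HN by lia; rewrite Hu by lia; nra.
Qed.

Lemma block_letters_odd :
  (forall x, exists z, Nat.iter L (rot alpha) x = x - d - IZR z) ->
  (INR lam + 1) * d <= 1 - alpha ->
  (forall r, cylinder alpha s r <-> 0 <= r < d) ->
  first_return_orbit alpha s L rho N ->
  block_letters alpha rho L N lam 0.
Proof.
  intros Hstep Hlam Hs (H0 & HN & Hmid).
  rewrite Hs in H0, HN.
  pose proof (pos_INR lam); assert (d <= 1 - alpha) by nra.
  assert (Hu : forall j, (1 <= j <= N - 1)%nat -> X j = X 0%nat + INR j * (- d) - (-1)).
  { apply (unwrap_orbit X (- d) (-1)); [apply block_point_circle | | lra |].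
    - apply block_point_step; intros x; destruct (Hstep x) as [z Hz]; exists z; rewrite Hz; ring.
    - intros j Hj; pose proof (block_point_circle j).
      assert (d <= X j) by (apply Rnot_lt_le; intros Hin; apply (Hmid j ltac:(lia)), Hs; lra).
      lra. }
  assert (HNd : 1 < INR N * d).
  { rewrite Hu, minus_INR in HN by lia; simpl INR in HN; pose proof (block_point_circle 0); nra. }
  split; [|split; [|split]].
  - apply sturm_0; change (0 <= X 0%nat < 1 - alpha); nra.
  - apply sturm_0_before; [exact alpha_01 | exact rho_circle |].
    replace (S (L - 1)) with (1 * L)%nat by lia; change (alpha <= X 1%nat).
    rewrite Hu by lia; simpl INR; nra.
  - intros i Hi.
    assert (HiN : (i < N - 2)%nat).
    { apply Nat.nle_gt; intros Hle.
      assert (INR N <= INR lam + 1) by (rewrite <- S_INR; apply le_INR; lia). nra. }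
    split; [exact HiN|].
    apply sturm_0_before; [exact alpha_01 | exact rho_circle |].
    replace (S ((i + 2) * L - 1)) with ((i + 2) * L)%nat by nia; change (alpha <= X (i + 2)%nat).
    assert (INR (i + 2) <= INR lam + 1) by (rewrite <- S_INR; apply le_INR; lia).
    rewrite Hu by lia; pose proof (block_point_circle 0); nra.
  - intros i Hi.
    apply sturm_0; change (0 <= X (S i) < 1 - alpha); split; [apply block_point_circle|].
    assert (INR (N - 1) <= INR (S i) + INR lam) by (rewrite <- plus_INR; apply le_INR; lia).
    rewrite Hu in HN by lia; rewrite Hu by lia; nra.
Qed.

End BlockLetters.

Lemma nth_firstn_skipn (w : list nat) i L t :
  (t < L)%nat -> nth t (firstn L (skipn i w)) 0%nat = nth (i + t) w 0%nat.
Proof.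
  intros Ht; rewrite nth_firstn, nth_skipn; destruct (Nat.ltb_spec t L); [reflexivity | lia].
Qed.

Lemma occurs_at_iff (v w : list nat) i :
  (i + length v <= length w)%nat ->
  occurs_at v w i <-> forall t, (t < length v)%nat -> nth (i + t) w 0%nat = nth t v 0%nat.
Proof.
  intros Hi; unfold occurs_at; split.
  - intros [_ Hv] t Ht; rewrite <- Hv, nth_firstn_skipn; auto.
  - intros Hv; split; [exact Hi|].
    apply nth_ext with (d := 0%nat) (d' := 0%nat); rewrite length_firstn, length_skipn; [lia|].
    intros t Ht; rewrite nth_firstn_skipn by lia; apply Hv; lia.
Qed.

Lemma length_strip (s w : list nat) : length (strip s w) = (length w - length s - length s)%nat.
Proof. unfold strip; rewrite length_skipn, length_firstn; lia. Qed.

Lemma nth_strip (s w : list nat) j :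
  (length s + j < length w - length s)%nat ->
  nth j (strip s w) 0%nat = nth (length s + j) w 0%nat.
Proof.
  intros Hj; unfold strip; rewrite nth_skipn, nth_firstn.
  destruct (Nat.ltb_spec (length s + j) (length w - length s)); [reflexivity | lia].
Qed.

Lemma length_block L m i : ((i + 1) * L <= length m)%nat -> length (block L m i) = L.
Proof. intros Hi; unfold block; rewrite length_firstn, length_skipn; lia. Qed.

Lemma nth_block L m i t : (t < L)%nat -> nth t (block L m i) 0%nat = nth (i * L + t) m 0%nat.
Proof. apply nth_firstn_skipn. Qed.

Section FirstReturnWord.

Variables (alpha rho : R) (s w : list nat) (L N : nat).
Hypothesis L_pos : (0 < L)%nat.
Hypothesis s_len : length s = L.
Hypothesis w_len : length w = (N * L)%nat.
Hypothesis w_sturm : forall j, (j < length w)%nat -> sturm alpha rho j = nth j w 0%nat.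
Hypothesis rho_circle : in_circle rho.

Lemma occurs_at_block_iff j :
  (j < N)%nat -> occurs_at s w (j * L) <-> cylinder alpha s (block_point alpha L rho j).
Proof.
  intros Hj; rewrite occurs_at_iff by nia; unfold cylinder; rewrite s_len.
  split.
  - intros Hocc; split; [apply iter_rot_circle, rho_circle|].
    intros t Ht; unfold block_point; rewrite <- sturm_shift, w_sturm by nia; auto.
  - intros [_ Hcyl] t Ht; rewrite <- w_sturm, sturm_shift by nia; auto.
Qed.

Lemma strip_block_count : (length (strip s w) / L = N - 2)%nat.
Proof.
  rewrite length_strip, s_len, w_len.
  replace (N * L - L - L)%nat with ((N - 2) * L)%nat by nia.
  apply Nat.div_mul; lia.
Qed.

Hypothesis N_ge2 : (2 <= N)%nat.
Hypothesis s_prefix : occurs_at s w 0.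

Lemma nth_prefix_sturm t : (t < L)%nat -> nth t s 0%nat = sturm alpha rho t.
Proof.
  intros Ht; rewrite w_sturm by nia.
  symmetry; apply (occurs_at_iff s w 0); [nia | exact s_prefix | lia].
Qed.

Lemma first_letter_sturm : first_letter s = sturm alpha rho 0.
Proof. apply nth_prefix_sturm; exact L_pos. Qed.

Lemma last_letter_sturm : last_letter s = sturm alpha rho (L - 1).
Proof. unfold last_letter; rewrite s_len; apply nth_prefix_sturm; lia. Qed.

Lemma first_letter_block i :
  (i < N - 2)%nat -> first_letter (block L (strip s w) i) = sturm alpha rho (S i * L).
Proof.
  intros Hi; unfold first_letter.
  rewrite nth_block, nth_strip, s_len, w_sturm by (rewrite ?s_len, ?w_len; nia).
  f_equal; lia.
Qed.

Lemma last_letter_block i :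
  (i < N - 2)%nat -> last_letter (block L (strip s w) i) = sturm alpha rho ((i + 2) * L - 1).
Proof.
  intros Hi; unfold last_letter.
  rewrite length_block by (rewrite length_strip, s_len, w_len; nia).
  rewrite nth_block, nth_strip, s_len, w_sturm by (rewrite ?s_len, ?w_len; nia).
  f_equal; nia.
Qed.

Lemma block_letters_first_return lam c :
  block_letters alpha rho L N lam c ->
  let n := (length (strip s w) / L)%nat in
  (forall i, (i < lam)%nat ->
     (i < n)%nat /\ last_letter (block L (strip s w) i) = last_letter s) /\
  (forall i, (n - lam <= i < n)%nat -> first_letter (block L (strip s w) i) = first_letter s) /\
  first_letter s = last_letter s.
Proof.
  intros (H0 & H1 & Hhead & Htail) n; unfold n; rewrite strip_block_count.
  rewrite first_letter_sturm, last_letter_sturm, H0, H1.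
  split; [|split; [|reflexivity]].
  - intros i Hi; destruct (Hhead i Hi) as [HiN Hc]; rewrite last_letter_block; auto.
  - intros i Hi; rewrite first_letter_block by lia; apply Htail; lia.
Qed.

End FirstReturnWord.

Lemma complete_first_return_orbit alpha s w L :
  (0 < L)%nat -> length s = L -> in_lang alpha w -> complete_first_return s w ->
  exists rho N, in_circle rho /\ (2 <= N)%nat /\ length w = (N * L)%nat /\
    (forall j, (j < length w)%nat -> sturm alpha rho j = nth j w 0%nat) /\
    first_return_orbit alpha s L rho N.
Proof.
  intros HL Hs [rho0 [Hrho0 [i0 Hw]]]
    (Hocc0 & HoccE & Hmod & (i & j & Hij & [Hi _] & [Hj _]) & Honly).
  set (rho := Nat.iter i0 (rot alpha) rho0).
  assert (Hrho : in_circle rho) by (apply iter_rot_circle, Hrho0).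
  assert (Hw' : forall t, (t < length w)%nat -> sturm alpha rho t = nth t w 0%nat).
  { intros t Ht; unfold rho; rewrite <- sturm_shift; auto. }
  set (N := (length w / L)%nat).
  assert (HwN : length w = (N * L)%nat).
  { unfold N; rewrite (Nat.div_mod_eq (length w) L) at 1; rewrite Hs in Hmod; lia. }
  rewrite Hs, HwN in Hi, Hj, HoccE, Honly.
  assert (HN : (2 <= N)%nat) by (destruct N as [|[|N]]; nia).
  pose proof (occurs_at_block_iff alpha rho s w L N HL Hs HwN Hw' Hrho) as Hblock.
  exists rho, N; do 4 (split; [assumption|]).
  split; [|split].
  - apply Hblock; [lia | exact Hocc0].
  - apply Hblock; [lia|].
    replace ((N - 1) * L)%nat with (N * L - L)%nat by nia; exact HoccE.
  - intros t Ht Hcyl; apply Hblock in Hcyl; [|lia].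
    destruct (Honly _ Hcyl (Nat.Div0.mod_mul t L)); nia.
Qed.

Lemma cylinder_same_letter alpha s r r' :
  (0 < length s)%nat -> cylinder alpha s r -> cylinder alpha s r' ->
  sturm alpha r 0 = sturm alpha r' 0.
Proof. intros Hs [_ Hr] [_ Hr']; rewrite Hr, Hr'; auto. Qed.

Section SingularFactor.

Variables (alpha : R) (a : nat -> nat).
Hypothesis alpha_01 : 0 < alpha < 1.
Hypothesis alpha_irrational : irrational alpha.
Hypothesis alpha_cf : is_cf_expansion alpha a.
Hypothesis a1_ge2 : (2 <= a 1)%nat.

Local Notation p k := (INR (cf_p a k)).
Local Notation q k := (INR (cf_q a k)).
Local Notation d k := (cf_dist a alpha k).

Let a_pos := proj1 alpha_cf.

Lemma cf_dist_gt0 k : 0 < d k.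
Proof. apply cf_dist_pos; assumption. Qed.

Lemma cf_dist_p_lt k : p (S (S k)) * d (S k) < alpha.
Proof.
  pose proof (cf_dist_p a alpha (S k)).
  assert (1 <= p (S k)) by (apply (le_INR 1); apply (cf_bounds a a_pos a1_ge2 k)).
  pose proof (cf_dist_gt0 (S (S k))); nra.
Qed.

Lemma cf_dist_qp_lt k : INR (cf_q a (S (S k)) - cf_p a (S (S k))) * d (S k) < 1 - alpha.
Proof.
  pose proof (cf_bounds a a_pos a1_ge2 (S k)) as (_ & Hpq & _).
  pose proof (cf_bounds a a_pos a1_ge2 (S (S k))) as (_ & Hpq2 & _).
  assert (1 <= q (S k) - p (S k)) by (rewrite <- minus_INR by lia; apply (le_INR 1); lia).
  rewrite minus_INR by lia.
  pose proof (cf_dist_q a alpha (S k)); pose proof (cf_dist_p a alpha (S k)).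
  pose proof (cf_dist_gt0 (S (S k))); nra.
Qed.

Lemma iter_rot_cf_q k x :
  exists z, Nat.iter (cf_q a k) (rot alpha) x = x + (-1) ^ k * d k - IZR z.
Proof.
  destruct (iter_rot_shift alpha (cf_q a k) x) as [z Hz].
  exists (z - Z.of_nat (cf_p a k))%Z.
  rewrite Hz, cf_q_mul_alpha, minus_IZR, <- INR_IZR_INZ; ring.
Qed.

Lemma singular_factor_cylinder k s :
  singular_factor alpha a (S k) s ->
  if Nat.odd (S k) then forall r, cylinder alpha s r <-> 0 <= r < d (S k)
  else forall r, cylinder alpha s r <-> 1 - d (S k) <= r < 1.
Proof.
  intros (_ & Hlen & Hcyl).
  assert (Hs : (0 < length s)%nat) by (rewrite Hlen; apply (cf_bounds a a_pos a1_ge2)).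
  pose proof (cf_dist_gt0 (S k)); pose proof (cf_dist_p_lt k); pose proof (cf_dist_qp_lt k).
  pose proof (cf_bounds a a_pos a1_ge2 (S k)) as (_ & _ & Hp).
  pose proof (cf_bounds a a_pos a1_ge2 (S (S k))) as (_ & Hpq & _).
  assert (1 <= p (S (S k))) by (apply (le_INR 1); exact Hp).
  assert (1 <= INR (cf_q a (S (S k)) - cf_p a (S (S k)))) by (apply (le_INR 1); lia).
  rewrite cf_q_mul_alpha, pow_m1_odd in Hcyl.
  (* The wrong orientation would put points of I_0 and of I_1 in the same cylinder. *)
  destruct (Nat.odd (S k)).
  - rewrite (frac_part_eq _ (- Z.of_nat (cf_p a (S k)))), opp_IZR, <- INR_IZR_INZ in Hcyl
      by (rewrite opp_IZR, <- INR_IZR_INZ; nra).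
    destruct Hcyl as [Hcyl | Hcyl]; [intros r; rewrite Hcyl; split; intros; lra|].
    exfalso.
    assert (Hletter : sturm alpha (d (S k)) 0 = sturm alpha (1 - alpha) 0).
    { apply cylinder_same_letter with s; [exact Hs | apply Hcyl; nra | apply Hcyl; nra]. }
    rewrite sturm_0, sturm_1 in Hletter by (simpl; nra); discriminate.
  - rewrite (frac_part_eq _ (- Z.of_nat (cf_p a (S k)) - 1)), minus_IZR, opp_IZR,
      <- INR_IZR_INZ in Hcyl
      by (rewrite minus_IZR, opp_IZR, <- INR_IZR_INZ; nra).
    destruct Hcyl as [Hcyl | Hcyl]; [|intros r; rewrite Hcyl; split; intros; lra].
    exfalso.
    assert (Hletter : sturm alpha 0 0 = sturm alpha (1 - alpha) 0).
    { apply cylinder_same_letter with s; [exact Hs | apply Hcyl; nra | apply Hcyl; nra]. }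
    rewrite sturm_0, sturm_1 in Hletter by (simpl; nra); discriminate.
Qed.

Lemma singular_block_letters k s rho N :
  singular_factor alpha a (S k) s -> in_circle rho -> (2 <= N)%nat ->
  first_return_orbit alpha s (cf_q a (S k)) rho N ->
  block_letters alpha rho (cf_q a (S k)) N
    (if Nat.odd (S k) then cf_q a (S k + 1) - cf_p a (S k + 1) - 1 else cf_p a (S k + 1) - 1)
    (if Nat.odd (S k) then 0 else 1).
Proof.
  intros Hs Hrho HN Horbit.
  pose proof (singular_factor_cylinder k s Hs) as Hcyl.
  pose proof (cf_bounds a a_pos a1_ge2 (S k)) as (HL & _ & Hp).
  pose proof (cf_bounds a a_pos a1_ge2 (S (S k))) as (_ & Hpq & _).
  pose proof (cf_dist_p_lt k); pose proof (cf_dist_qp_lt k); pose proof (cf_dist_gt0 (S k)).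
  pose proof (iter_rot_cf_q (S k)) as Hstep; rewrite pow_m1_odd in Hstep.
  replace (S k + 1)%nat with (S (S k)) by lia.
  destruct (Nat.odd (S k)).
  - apply block_letters_odd with (d := cf_dist a alpha (S k)) (s := s); auto.
    + intros x; destruct (Hstep x) as [z Hz]; exists z; rewrite Hz; ring.
    + rewrite <- S_INR, <- Nat.sub_succ_l, Nat.sub_succ, Nat.sub_0_r by lia; lra.
  - apply block_letters_even with (d := cf_dist a alpha (S k)) (s := s); auto.
    + intros x; destruct (Hstep x) as [z Hz]; exists z; rewrite Hz; ring.
    + rewrite <- S_INR, <- Nat.sub_succ_l, Nat.sub_succ, Nat.sub_0_r by lia; lra.
Qed.

End SingularFactor.

Theorem lemma4p5 (alpha : R) (a : nat -> nat) :
  0 < alpha < 1 -> irrational alpha ->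
  is_cf_expansion alpha a -> (2 <= a 1%nat)%nat ->
  forall (k : nat) (s w : list nat),
    singular_factor alpha a k s ->
    in_lang alpha w ->
    complete_first_return s w ->
    let L := cf_q a k in
    let m := strip s w in
    let n := Nat.div (length m) L in
    let u := block L m in
    let lam := if Nat.odd k
               then (cf_q a (k + 1) - cf_p a (k + 1) - 1)%nat
               else (cf_p a (k + 1) - 1)%nat in
    (forall i, (i < lam)%nat -> (i < n)%nat /\ last_letter (u i) = last_letter s) /\
    (forall i, (n - lam <= i < n)%nat -> first_letter (u i) = first_letter s) /\
    first_letter s = last_letter s.
Proof.
  intros Halpha Hirr Hcf Ha1 k s w Hs Hw Hret; cbv zeta.
  pose proof (proj1 (proj2 Hs)) as Hlen.
  destruct k as [|k].
  - simpl; split; [lia | split; [lia|]].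
    unfold first_letter, last_letter; rewrite Hlen; reflexivity.
  - pose proof (cf_bounds a (proj1 Hcf) Ha1 (S k)) as (HL & _).
    destruct (complete_first_return_orbit alpha s w (cf_q a (S k)) HL Hlen Hw Hret)
      as (rho & N & Hrho & HN & HwN & Hsturm & Horbit).
    eapply block_letters_first_return;
      [exact HL | exact Hlen | exact HwN | exact Hsturm | exact HN | apply Hret |].
    apply singular_block_letters with (s := s); assumption.
Qed.
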